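(* Let $\mathbf v\in\mathrm{GF}(q^m)^n$ have rank $r\ge0$. The rank weight enumerator of $\mathcal L=\langle\mathbf v\rangle^\perp$ depends only on $r$ and equals $$W^{\mathrm R}_{\mathcal L}(x,y)=q^{-m}\left\{\big[x+(q^m-1)y\big]^{[n]}+(q^m-1)(x-y)^{[r]}*\big[x+(q^m-1)y\big]^{[n-r]}\right\}.$$
   Context: The rank of a vector over $\mathrm{GF}(q^m)$ is the maximum number of its coordinates linearly independent over $\mathrm{GF}(q)$. $\langle\mathbf v\rangle=\{a\mathbf v:a\in\mathrm{GF}(q^m)\}$ and $\perp$ denotes the dual with respect to the standard inner product $\sum_iu_iv_i$. The rank weight enumerator of a code $\mathcal C\subseteq\mathrm{GF}(q^m)^n$ is $\sum_{\mathbf u\in\mathcal C}y^{\mathrm{rk}(\mathbf u)}x^{n-\mathrm{rk}(\mathbf u)}$. $q$-product: for homogeneous polynomials $a(x,y;m)=\sum_{i=0}^r a_i(m)y^ix^{r-i}$ and $b(x,y;m)=\sum_{j=0}^s b_j(m)y^jx^{s-j}$ with coefficients real functions of $m$ (out-of-range coefficients zero), $a*b=\sum_{u=0}^{r+s}c_u(m)y^ux^{r+s-u}$ with $c_u(m)=\sum_{i=0}^u q^{is}a_i(m)b_{u-i}(m-i)$; $q$-powers: $a^{[0]}=1$, $a^{[n]}=a^{[n-1]}*a$. The polynomial $x+(q^m-1)y$ has coefficients $1$ and $q^m-1$, and $x-y$ has coefficients $1,-1$. *)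

From mathcomp Require Import all_boot all_order all_algebra.
Set Implicit Arguments. Unset Strict Implicit. Unset Printing Implicit Defensive.
Import Order.TTheory GRing.Theory Num.Theory.
Local Open Scope ring_scope.

(* The field GF(q^m) is F : finFieldType with #|F| = q^m; GF(q) is its
   subfield {x | x^q = x}. Vectors of GF(q^m)^n are {ffun 'I_n -> F}. *)

Section Rank.
Variables (F : finFieldType) (q n : nat).

Definition coords_indep (v : {ffun 'I_n -> F}) (S : {set 'I_n}) : bool :=
  [forall c : {ffun 'I_n -> F},
     ([forall i in S, c i ^+ q == c i] && (\sum_(i in S) c i * v i == 0))
     ==> [forall i in S, c i == 0]].

Definition rk (v : {ffun 'I_n -> F}) : nat :=
  \max_(S : {set 'I_n} | coords_indep v S) #|S|.

Definition dotp (u v : {ffun 'I_n -> F}) : F := \sum_i u i * v i.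
Definition dual_line (v : {ffun 'I_n -> F}) : {set {ffun 'I_n -> F}} :=
  [set u | dotp u v == 0].
End Rank.

(* Homogeneous polynomials sum_i a_i(m) y^i x^(r-i), coefficients being
   functions of m (m an integer, values rational). Represented as the
   pair (r, a); coefficients outside 0..r are zero. *)
Definition hpoly := (nat * (nat -> int -> rat))%type.

Definition hcoef (a : hpoly) (i : nat) (m : int) : rat :=
  if (i <= a.1)%N then a.2 i m else 0.

Definition qprod (q : nat) (a b : hpoly) : hpoly :=
  ((a.1 + b.1)%N,
  fun u m => \sum_(i < u.+1) (q%:R : rat) ^+ (i * b.1) * hcoef a i m
                               * hcoef b (u - i) (m - i%:Z)).

Fixpoint qpow (q : nat) (a : hpoly) (n : nat) : hpoly :=
  match n with
  | 0 => (0%N, fun _ _ => 1)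
  | k.+1 => qprod q (qpow q a k) a
  end.

Definition hadd (a b : hpoly) : hpoly :=
  (maxn a.1 b.1, fun i m => hcoef a i m + hcoef b i m).
Definition hscale (c : int -> rat) (a : hpoly) : hpoly :=
  (a.1, fun i m => c m * hcoef a i m).

Definition hA (q : nat) : hpoly :=
  (1%N, fun i m => if i == 0%N then 1 else (q%:R : rat) ^ m - 1).
Definition hD : hpoly := (1%N, fun i _ => if i == 0%N then 1 else -1).

Definition rank_wenum (F : finFieldType) (q n : nat)
  (C : {set {ffun 'I_n -> F}}) : hpoly :=
  (n, fun i _ => (#|[set u in C | rk q u == i]|)%:R).

(* The rank of u is log_q of the size of the GF(q)-span of its coordinates, so
   appending a coordinate y to u raises the rank by one exactly for the
   q^m - q^(rk u) values of y outside that span.  We induct on n, writing v as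
   a vector w with one extra coordinate x.  If x lies in the span of w, the
   substitution u |-> u + y c, where x = c.w with c over GF(q), shows that the
   counts for v are those for w q-multiplied by x + (q^m - 1) y.  Otherwise v
   has full rank and the extra coordinate of u is determined by the rest; the
   number of u of rank k whose span contains -(u.w)/x is then obtained by
   averaging the induction hypothesis over the q^n full-rank vectors w + x c.
   The closed form satisfies the same two recursions, which are read off
   coefficientwise from the definition of the q-product. *)

From HB Require Import structures.
From mathcomp Require Import all_boot all_order all_algebra all_fingroup all_solvable all_field.
From mathcomp Require Import zify ring.
Set Implicit Arguments. Unset Strict Implicit. Unset Printing Implicit Defensive.
Import Order.TTheory GRing.Theory Num.Theory.
Local Open Scope ring_scope.

(** * q-products *)

Section QProduct.
Variable q : nat.
Local Notation Q := (q%:R : rat).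
Local Notation hone := ((0%N, fun _ _ => 1) : hpoly).

Lemma Q_neq0 : (0 < q)%N -> Q != 0. Proof. by rewrite pnatr_eq0 -lt0n. Qed.

Lemma hcoef_gt (a : hpoly) i m : (a.1 < i)%N -> hcoef a i m = 0.
Proof. by rewrite /hcoef ltnNge => /negPf->. Qed.

Lemma hcoef_qprod (a b : hpoly) u m :
  hcoef (qprod q a b) u m =
  \sum_(i < u.+1) Q ^+ (i * b.1) * hcoef a i m * hcoef b (u - i) (m - i%:Z).
Proof.
rewrite {1}/hcoef /=; case: leqP => // gt_u; symmetry; apply: big1 => i _.
have [le_ia|lt_ai] := leqP i a.1; last by rewrite hcoef_gt // mulr0 mul0r.
by rewrite [hcoef b _ _]hcoef_gt ?mulr0 //; lia.
Qed.

Lemma hcoef_hadd a b i m : hcoef (hadd a b) i m = hcoef a i m + hcoef b i m.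
Proof.
rewrite {1}/hcoef /=; case: leqP => //; rewrite gtn_max => /andP[lt_a lt_b].
by rewrite !hcoef_gt ?addr0.
Qed.

Lemma hcoef_hscale c a i m : hcoef (hscale c a) i m = c m * hcoef a i m.
Proof. by rewrite {1}/hcoef /=; case: leqP => // lt_a; rewrite hcoef_gt ?mulr0. Qed.

Lemma hcoef_hone i m : hcoef hone i m = (i == 0%N)%:R.
Proof. by case: i. Qed.

Lemma hcoef_qprod1p b u m : hcoef (qprod q hone b) u m = hcoef b u m.
Proof.
rewrite hcoef_qprod big_ord_recl big1 ?addr0 => [|i _]; last first.
  by rewrite hcoef_hone mulr0 mul0r.
by rewrite hcoef_hone mul0n expr0 !mul1r subn0.
Qed.

Lemma hcoef_qprodp1 a u m : hcoef (qprod q a hone) u m = hcoef a u m.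
Proof.
rewrite hcoef_qprod big_ord_recr big1 => [|i _] /=.
  by rewrite add0r subnn hcoef_hone muln0 expr0 mul1r mulr1.
by rewrite hcoef_hone subn_eq0 leqNgt ltn_ord mulr0.
Qed.

Lemma hcoef_qprodA a b c u m :
  hcoef (qprod q a (qprod q b c)) u m = hcoef (qprod q (qprod q a b) c) u m.
Proof.
(* Both sides are the sum of [f k i] over [k <= i <= u]. *)
pose f (k i : nat) := if (k <= i)%N then Q ^+ (k * b.1 + i * c.1) * hcoef a k m *
  hcoef b (i - k) (m - k%:Z) * hcoef c (u - i) (m - i%:Z) else 0.
transitivity (\sum_(k < u.+1) \sum_(i < u.+1) f k i).
  rewrite hcoef_qprod; apply: eq_bigr => k _.
  have hk : (k <= u)%N by rewrite -ltnS.
  rewrite -(big_mkord xpredT (f k)) (@big_cat_nat _ _ _ k) ?leqW //=.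
  rewrite big_nat_cond big1 ?add0r => [|i /andP[/andP[_ hi] _]]; last first.
    by rewrite /f leqNgt hi.
  rewrite -[k in \sum_(k <= _ < _) _]add0n big_addn subSn // big_mkord.
  rewrite hcoef_qprod mulr_sumr.
  apply: eq_bigr => j _; rewrite /f leq_addl addnK (addnC j k) subnDA.
  rewrite PoszD opprD addrA.
  rewrite mulnDr mulnDl !exprD; ring.
rewrite exchange_big hcoef_qprod; apply: eq_bigr => i _.
transitivity (\sum_(k < i.+1) f k i).
  rewrite (big_ord_widen _ (f^~ i) (ltn_ord i)) [RHS]big_mkcond /=.
  by apply: eq_bigr => k _; rewrite ltnS /f; case: leqP.
rewrite hcoef_qprod mulr_sumr mulr_suml; apply: eq_bigr => k _.
by rewrite /f -ltnS ltn_ord exprD; ring.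
Qed.

Lemma hcoef_qprod_deg1 a b i m : b.1 = 1%N ->
  hcoef (qprod q a b) i m = Q ^+ i * hcoef a i m * hcoef b 0 (m - i%:Z)
    + (0 < i)%:R * Q ^+ i.-1 * hcoef a i.-1 m * hcoef b 1 (m - i.-1%:Z).
Proof.
move=> b1; rewrite hcoef_qprod big_ord_recr /= subnn b1 muln1 addrC; congr (_ + _).
case: i => [|i]; first by rewrite big_ord0 mul0r !mul0r.
rewrite big_ord_recr big1 => [|k _] /=; last first.
  by rewrite [hcoef b _ _]hcoef_gt ?mulr0 // b1; have := ltn_ord k; lia.
by rewrite add0r subSn // subnn muln1 mul1r.
Qed.

Lemma hcoef_qprod_hA a i (m : int) : (0 < q)%N ->
  hcoef (qprod q a (hA q)) i m
  = Q ^+ i * hcoef a i m + (0 < i)%:R * (Q ^ m - Q ^+ i.-1) * hcoef a i.-1 m.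
Proof.
move=> q_gt0; rewrite hcoef_qprod_deg1 // [hcoef (hA q) 0 _]/hcoef mulr1.
rewrite [hcoef (hA q) 1 _]/hcoef /= -!mulrA; congr (_ + _ * _).
have split_m : Q ^+ i.-1 * Q ^ (m - i.-1%:Z) = Q ^ m.
  by rewrite exprnP -expfzDr ?Q_neq0 // addrC subrK.
by rewrite mulrCA mulrBr split_m mulr1 mulrC.
Qed.

Lemma hcoef_qprod_hD a i m :
  hcoef (qprod q a hD) i m
  = Q ^+ i * hcoef a i m - (0 < i)%:R * Q ^+ i.-1 * hcoef a i.-1 m.
Proof. by rewrite hcoef_qprod_deg1 // [hcoef hD 0 _]/hcoef [hcoef hD 1 _]/hcoef /=; ring. Qed.

End QProduct.

Section DualFormula.
Variables (q m : nat).
Hypothesis q_gt0 : (0 < q)%N.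
Local Notation Q := (q%:R : rat).
Local Notation M := (Q ^+ m).

Definition coefA n i := hcoef (qpow q (hA q) n) i m%:Z.
Definition coefDA r k i := hcoef (qprod q (qpow q hD r) (qpow q (hA q) k)) i m%:Z.
Definition coef_dual n r i := Q ^- m * (coefA n i + (M - 1) * coefDA r (n - r) i).

Lemma coefA_S n i :
  coefA n.+1 i = Q ^+ i * coefA n i + (0 < i)%:R * (M - Q ^+ i.-1) * coefA n i.-1.
Proof. exact: hcoef_qprod_hA. Qed.

Lemma coefDA_S r k i :
  coefDA r k.+1 i = Q ^+ i * coefDA r k i + (0 < i)%:R * (M - Q ^+ i.-1) * coefDA r k i.-1.
Proof. by rewrite /coefDA /= hcoef_qprodA hcoef_qprod_hA. Qed.

Lemma coef_dual_S n r i : (r <= n)%N ->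
  coef_dual n.+1 r i
  = Q ^+ i * coef_dual n r i + (0 < i)%:R * (M - Q ^+ i.-1) * coef_dual n r i.-1.
Proof. by move=> le_rn; rewrite /coef_dual subSn // coefA_S coefDA_S; ring. Qed.

Lemma coef_dual_SS n i :
  coef_dual n.+1 n.+1 i
  = Q ^+ i * coef_dual n n i + (0 < i)%:R * (coefA n i.-1 - Q ^+ i.-1 * coef_dual n n i.-1).
Proof.
have M_neq0 : M != 0 by rewrite expf_neq0 ?Q_neq0.
rewrite /coef_dual !subnn /coefDA /= !hcoef_qprodp1 hcoef_qprod_hD coefA_S.
by field.
Qed.

Lemma coef_dual_r0 n i : coef_dual n 0 i = coefA n i.
Proof.
have M_neq0 : M != 0 by rewrite expf_neq0 ?Q_neq0.
by rewrite /coef_dual subn0 /coefDA /= hcoef_qprod1p -/(coefA n i); field.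
Qed.

End DualFormula.

Section Insertion.
Variables (T : Type) (n : nat) (j : 'I_n.+1).

Definition ins_coord (u : {ffun 'I_n -> T}) (y : T) : {ffun 'I_n.+1 -> T} :=
  [ffun k => if unlift j k is Some k' then u k' else y].

Definition del_coord (v : {ffun 'I_n.+1 -> T}) : {ffun 'I_n -> T} :=
  [ffun k => v (lift j k)].

Lemma ins_coord_j u y : ins_coord u y j = y.
Proof. by rewrite ffunE unlift_none. Qed.

Lemma ins_coord_lift u y k : ins_coord u y (lift j k) = u k.
Proof. by rewrite ffunE liftK. Qed.

Lemma ins_coordK y : cancel (ins_coord^~ y) del_coord.
Proof. by move=> u; apply/ffunP => k; rewrite ffunE ins_coord_lift. Qed.

Lemma del_coordK v : ins_coord (del_coord v) (v j) = v.
Proof. by apply/ffunP => k; rewrite ffunE; case: unliftP => [k' ->|->] //; rewrite ffunE. Qed.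

End Insertion.

Lemma big_ins_coord (R : nmodType) (T : finType) n (j : 'I_n.+1)
    (G : {ffun 'I_n.+1 -> T} -> R) :
  \sum_v G v = \sum_(u : {ffun 'I_n -> T}) \sum_(y : T) G (ins_coord j u y).
Proof.
rewrite pair_big /= (reindex (fun p => ins_coord j p.1 p.2)) //=.
exists (fun v => (del_coord j v, v j)) => [[u y] _|v _] /=.
  by rewrite ins_coordK ins_coord_j.
exact: del_coordK.
Qed.

Lemma sum_indicator_card (R : pzSemiRingType) (T : finType) (A : {pred T}) (P : pred T) :
  \sum_(x in A) (P x)%:R = #|[set x in A | P x]|%:R :> R.
Proof.
rewrite -sum1dep_card natr_sum big_mkcondr; apply: eq_bigr => x _.
by case: (P x).
Qed.

(** * GF(q)-spans and rank *)

Section RankTheory.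
Variables (F : finFieldType) (q m : nat).
Hypotheses (q_gt1 : (1 < q)%N) (m_gt0 : (0 < m)%N) (cardF : #|F| = (q ^ m)%N).

Lemma pnat_pchar_q : [pchar F].-nat q.
Proof.
have [p p_pr pcharFp] := finPcharP F.
have p_group : pgroup p [set: F] := abelem_pgroup (fin_ring_pchar_abelem pcharFp).
have : p.-nat q.
  by apply: pnat_dvd p_group; rewrite cardsT cardF -(prednK m_gt0) expnS dvdn_mulr.
by rewrite (eq_pnat _ (pcharf_eq pcharFp)).
Qed.

Lemma exprDq (a b : F) : (a + b) ^+ q = a ^+ q + b ^+ q.
Proof. exact: exprDn_pchar pnat_pchar_q. Qed.

Definition Kq : {pred F} := fun x => x ^+ q == x.

Lemma Kq_divring_closed : GRing.divring_closed Kq.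
Proof.
have exprNq (a : F) : (- a) ^+ q = - a ^+ q.
  by apply/eqP; rewrite -addr_eq0 -exprDq addNr expr0n; case: q q_gt1.
split=> [|x y|x y]; rewrite !unfold_in /Kq ?expr1n // => /eqP xq /eqP yq.
  by rewrite exprDq exprNq xq yq.
by rewrite exprMn exprVn xq yq.
Qed.

HB.instance Definition _ := GRing.isDivringClosed.Build F Kq Kq_divring_closed.

Lemma card_Kq : #|Kq| = q.
Proof.
have q_gt0 := ltnW q_gt1.
pose P : {poly F} := 'X^q - 'X.
have size_P : size P = q.+1.
  by rewrite size_polyDl ?size_polyXn // size_polyN size_polyX.
(* [q - 1] divides [q ^ m - 1], so [P] divides ['X^#|F| - 'X], which splits. *)
have P_dvd : P %| \prod_x ('X - x%:P).
  rewrite -finField_genPoly cardF.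
  have [b qm_pred] := dvdnP (dvdn_pred_predX q m).
  have -> : (q ^ m = (q.-1 * b).+1)%N by rewrite mulnC -qm_pred prednK // expn_gt0 q_gt0.
  rewrite /P -{1}(prednK q_gt0) !exprS -[X in _ %| _ - X]mulr1 -[X in _ - X %| _]mulr1.
  rewrite -!mulrBr dvdp_mul2l ?polyX_eq0 // exprM -[X in _ %| _ - X](expr1n _ b).
  by rewrite subrXX dvdp_mulr.
have [mask_s eqp_P] := dvdp_prod_XsubC P_dvd.
set s := mask mask_s _ in eqp_P.
have s_uniq : uniq s by apply/mask_uniq/index_enum_uniq.
have size_s : size s = q by have := eqp_size eqp_P; rewrite size_prod_XsubC size_P => -[].
rewrite -size_s -(card_uniqP s_uniq); apply: eq_card => x.
by rewrite unfold_in /Kq -(root_prod_XsubC s x) -(eqp_root eqp_P) rootE !hornerE subr_eq0.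
Qed.

Local Notation coefs S := (pffun_on (0 : F) S Kq).

Lemma coefsP n (S : {set 'I_n}) (c : {ffun 'I_n -> F}) :
  reflect (forall k, if k \in S then c k \in Kq else c k == 0) (c \in coefs S).
Proof.
by apply: (iffP familyP) => coefs_c k; have := coefs_c k; case: (k \in S); rewrite inE.
Qed.

Lemma coefsTP n (c : {ffun 'I_n -> F}) : reflect (forall k, c k \in Kq) (c \in coefs setT).
Proof. by apply: (iffP (coefsP _ _)) => coefs_c k; have := coefs_c k; rewrite in_setT. Qed.

Lemma coefs0 n (S : {set 'I_n}) : 0 \in coefs S.
Proof. by apply/coefsP => k; rewrite ffunE rpred0; case: (k \in S). Qed.

Lemma coefs_shift n (S : {set 'I_n}) t c d : t \in Kq ->
  c \in coefs S -> d \in coefs S -> c + [ffun k => t * d k] \in coefs S.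
Proof.
move=> Kt /coefsP cS /coefsP dS; apply/coefsP => k; rewrite !ffunE.
move: (cS k) (dS k); case: (k \in S) => [Kc Kd|/eqP-> /eqP->]; last by rewrite mulr0 addr0.
by rewrite rpredD ?rpredM.
Qed.

Lemma dotp_coefs n (S : {set 'I_n}) c u :
  c \in coefs S -> dotp c u = \sum_(i in S) c i * u i.
Proof.
move/coefsP=> cS; rewrite /dotp [RHS]big_mkcond; apply: eq_bigr => k _.
by have := cS k; case: (k \in S) => // /eqP->; rewrite mul0r.
Qed.

Lemma dotp_shift n t (c d u : {ffun 'I_n -> F}) :
  dotp (c + [ffun k => t * d k]) u = dotp c u + t * dotp d u.
Proof.
rewrite /dotp mulr_sumr -big_split; apply: eq_bigr => k _.
by rewrite !ffunE mulrDl mulrA.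
Qed.

Lemma dotpC n (u w : {ffun 'I_n -> F}) : dotp u w = dotp w u.
Proof. by apply: eq_bigr => k _; rewrite mulrC. Qed.

Definition span_on n (S : {set 'I_n}) (u : {ffun 'I_n -> F}) : {set F} :=
  [set dotp c u | c in coefs S].

Local Notation span u := (span_on setT u).

Lemma span_on_dotp n (S : {set 'I_n}) c u : c \in coefs S -> dotp c u \in span_on S u.
Proof. exact: imset_f. Qed.

Section SpanOn.
Variables (n : nat) (S : {set 'I_n}) (u : {ffun 'I_n -> F}).

Lemma span_on0 : 0 \in span_on S u.
Proof.
apply/imsetP; exists 0; first exact: coefs0.
by rewrite /dotp big1 // => k _; rewrite ffunE mul0r.
Qed.

Lemma span_on_lin t a b : t \in Kq ->
  a \in span_on S u -> b \in span_on S u -> a + t * b \in span_on S u.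
Proof.
move=> Kt /imsetP[c cS ->] /imsetP[d dS ->]; apply/imsetP.
by exists (c + [ffun k => t * d k]); rewrite ?coefs_shift ?dotp_shift.
Qed.

Lemma span_onZ t a : t \in Kq -> a \in span_on S u -> t * a \in span_on S u.
Proof. by move=> Kt a_span; rewrite -[_ * _]add0r span_on_lin ?span_on0. Qed.

Lemma span_onD a b : a \in span_on S u -> b \in span_on S u -> a + b \in span_on S u.
Proof. by move=> a_span b_span; rewrite -[b]mul1r span_on_lin ?rpred1. Qed.

Lemma span_on_sum (I : finType) (P : pred I) (f : I -> F) :
  (forall i, P i -> f i \in span_on S u) -> \sum_(i | P i) f i \in span_on S u.
Proof.
move=> f_span; apply: (big_ind (fun x => x \in span_on S u)) => //.
  exact: span_on0.
exact: span_onD.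
Qed.

Lemma mem_span_on_coord i : i \in S -> u i \in span_on S u.
Proof.
move=> iS; apply/imsetP; exists [ffun k => (k == i)%:R].
  apply/coefsP => k; rewrite ffunE; case: eqP => [->|_]; first by rewrite iS rpred1.
  by rewrite rpred0; case: (k \in S).
rewrite /dotp (bigD1 i) //= big1 => [|k /negPf]; rewrite ffunE ?eqxx ?mul1r ?addr0 //.
by move->; rewrite mul0r.
Qed.

End SpanOn.

Lemma span_on_sub n n' (S : {set 'I_n}) (T : {set 'I_n'}) (u : {ffun 'I_n -> F}) w :
  {in S, forall i, u i \in span_on T w} -> span_on S u \subset span_on T w.
Proof.
move=> u_span; apply/subsetP => _ /imsetP[c cS ->]; rewrite (dotp_coefs _ cS).
apply: span_on_sum => i iS; move/coefsP: cS => /(_ i); rewrite iS => Kci.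
by rewrite span_onZ ?u_span.
Qed.

Lemma coords_indepP n (u : {ffun 'I_n -> F}) (S : {set 'I_n}) :
  reflect (forall c : {ffun 'I_n -> F}, {in S, forall i, c i \in Kq} ->
             \sum_(i in S) c i * u i = 0 -> {in S, forall i, c i = 0})
          (coords_indep q u S).
Proof.
apply: (iffP forallP) => [indep c Kc rel i iS | indep c].
  move/implyP: (indep c) => /(_ _)/forall_inP/(_ i iS)/eqP; apply.
  by rewrite rel eqxx andbT; apply/forall_inP.
apply/implyP => /andP[/forall_inP Kc /eqP rel]; apply/forall_inP => i iS.
by apply/eqP; apply: indep.
Qed.

Lemma mem_span_on_relation n (S : {set 'I_n}) (u c : {ffun 'I_n -> F}) k :
  {in S, forall i, c i \in Kq} -> \sum_(i in S) c i * u i = 0 ->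
  k \in S -> c k != 0 -> u k \in span_on (S :\ k) u.
Proof.
move=> Kc /eqP rel kS ck_neq0; rewrite (big_setD1 k kS) /= addrC addr_eq0 in rel.
have -> : u k = \sum_(i in S :\ k) - (c k)^-1 * (c i * u i).
  by rewrite -mulr_sumr (eqP rel) mulrNN mulrA mulVf ?mul1r.
apply: span_on_sum => i iSk; have /setD1P[_ iS] := iSk.
by rewrite mulrA span_onZ ?mem_span_on_coord ?rpredM ?rpredN ?rpredV ?Kc.
Qed.

Lemma card_span_on_indep n (S : {set 'I_n}) (u : {ffun 'I_n -> F}) :
  coords_indep q u S -> #|span_on S u| = (q ^ #|S|)%N.
Proof.
move/coords_indepP=> indep; rewrite card_in_imset ?card_pffun_on ?card_Kq //.
move=> c1 c2 c1S c2S eq12.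
pose d := c1 + [ffun k => -1 * c2 k].
have dS : d \in coefs S by rewrite coefs_shift ?rpredN1.
have d0 : {in S, forall i, d i = 0}.
  apply: indep => [i iS|]; first by have := coefsP _ _ dS i; rewrite iS.
  by rewrite -(dotp_coefs _ dS) dotp_shift eq12 mulN1r subrr.
apply/ffunP => k; case kS : (k \in S).
  by have /eqP := d0 k kS; rewrite !ffunE mulN1r subr_eq0 => /eqP.
by have := coefsP _ _ c1S k; have := coefsP _ _ c2S k; rewrite kS => /eqP-> /eqP->.
Qed.

Lemma expn_rk n (u : {ffun 'I_n -> F}) : (q ^ rk q u)%N = #|span u|.
Proof.
have indep0 : coords_indep q u set0 by apply/coords_indepP => c _ _ i; rewrite inE.
have [S indS rkS] : exists2 S, coords_indep q u S & rk q u = #|S|.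
  have /card_gt0P ne : exists S, S \in [pred S | coords_indep q u S] by exists set0.
  have [S indS maxS] := eq_bigmax_cond (fun S : {set 'I_n} => #|S|) ne.
  by exists S; rewrite // -maxS; apply: eq_bigl.
have S_max T : coords_indep q u T -> (#|T| <= #|S|)%N.
  by move=> indT; rewrite -rkS leq_bigmax_cond.
suff -> : span u = span_on S u by rewrite rkS card_span_on_indep.
apply/eqP; rewrite eqEsubset; apply/andP; split; apply: span_on_sub => i _; last first.
  exact/mem_span_on_coord/in_setT.
have [iS|iNS] := boolP (i \in S); first exact: mem_span_on_coord.
apply: contraT => ui_notin.
have indSi : coords_indep q u (i |: S).
  apply/coords_indepP => c Kc rel.
  have ci0 : c i = 0.
    apply/eqP; apply: contraNT ui_notin => ci_neq0; rewrite -(setU1K iNS).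
    exact: mem_span_on_relation Kc rel (setU11 i S) ci_neq0.
  move: rel; rewrite big_setU1 //= ci0 mul0r add0r => rel.
  have cS0 := coords_indepP _ _ indS c (fun k kS => Kc k (setU1r i kS)) rel.
  by move=> k /setU1P[->|]; last exact: cS0.
by have := S_max _ indSi; rewrite cardsU1 iNS ltnn.
Qed.

Lemma rk_leq n (u : {ffun 'I_n -> F}) : (rk q u <= n)%N.
Proof. by apply/bigmax_leqP => S _; rewrite -[n in (_ <= n)%N]card_ord max_card. Qed.

Lemma eq_rk n n' (u : {ffun 'I_n -> F}) (w : {ffun 'I_n' -> F}) :
  span u = span w -> rk q u = rk q w.
Proof. by move=> eq_span; apply/eqP; rewrite -(eqn_exp2l _ _ q_gt1) !expn_rk eq_span. Qed.

Lemma rk0 n : rk q (0 : {ffun 'I_n -> F}) = 0%N.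
Proof.
have span0 : span (0 : {ffun 'I_n -> F}) = [set 0].
  apply/eqP; rewrite eqEsubset sub1set span_on0 andbT.
  by apply/subsetP => _ /imsetP[c _ ->]; rewrite inE /dotp big1 // => k _; rewrite ffunE mulr0.
by apply/eqP; rewrite -(eqn_exp2l _ _ q_gt1) expn_rk span0 cards1.
Qed.

Section InsertCoordinate.
Variables (n : nat) (j : 'I_n.+1).
Implicit Types (u w c : {ffun 'I_n -> F}) (v : {ffun 'I_n.+1 -> F}).

Lemma dotp_del_coord (c v : {ffun 'I_n.+1 -> F}) :
  dotp c v = c j * v j + dotp (del_coord j c) (del_coord j v).
Proof.
by rewrite /dotp (bigD1_ord j) //=; congr (_ + _); apply: eq_bigr => k; rewrite !ffunE.
Qed.

Lemma dotp_ins_coord c t u y :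
  dotp (ins_coord j c t) (ins_coord j u y) = t * y + dotp c u.
Proof. by rewrite dotp_del_coord !ins_coord_j !ins_coordK. Qed.

Lemma coefs_ins_coord c t :
  (ins_coord j c t \in coefs setT) = (c \in coefs setT) && (t \in Kq).
Proof.
apply/coefsTP/andP => [Kct|[/coefsTP Kc Kt] k].
  split; last by rewrite -(ins_coord_j j c t).
  by apply/coefsTP => k; rewrite -(ins_coord_lift j c t).
by rewrite ffunE; case: unlift.
Qed.

Lemma span_ins_coordP u y z :
  reflect (exists2 t, t \in Kq & z - t * y \in span u) (z \in span (ins_coord j u y)).
Proof.
apply: (iffP imsetP) => [[c Kc ->]|[t Kt /imsetP[c Kc z_ty]]].
  rewrite -(del_coordK j c) coefs_ins_coord in Kc; case/andP: Kc => Kc Kcj.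
  by exists (c j); rewrite // -{1}(del_coordK j c) dotp_ins_coord addrC addKr span_on_dotp.
exists (ins_coord j c t); first by rewrite coefs_ins_coord Kc Kt.
by rewrite dotp_ins_coord -z_ty addrC subrK.
Qed.

Lemma span_sub_ins_coord u y : span u \subset span (ins_coord j u y).
Proof.
by apply: span_on_sub => k _; rewrite -(ins_coord_lift j u y) mem_span_on_coord ?inE.
Qed.

Lemma span_ins_coord_sub n' (w : {ffun 'I_n' -> F}) u y :
  (forall k, u k \in span w) -> y \in span w -> span (ins_coord j u y) \subset span w.
Proof.
move=> u_span y_span; apply: span_on_sub => k _.
by case: (unliftP j k) => [k' ->|->]; rewrite ?ins_coord_lift ?ins_coord_j.
Qed.

Lemma span_ins_coord_mem u y : y \in span u -> span (ins_coord j u y) = span u.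
Proof.
move=> y_span; apply/eqP; rewrite eqEsubset span_sub_ins_coord andbT.
by apply: span_ins_coord_sub => // k; rewrite mem_span_on_coord ?inE.
Qed.

Lemma card_span_ins_coord u y :
  y \notin span u -> #|span (ins_coord j u y)| = (q * #|span u|)%N.
Proof.
move=> y_notin.
have -> : span (ins_coord j u y) = [set p.1 + p.2 * y | p in setX (span u) [set t in Kq]].
  apply/setP => z; apply/span_ins_coordP/imsetP => [[t Kt z_ty]|[[s t] /setXP[s_span]]].
    by exists (z - t * y, t); rewrite ?inE ?z_ty ?subrK.
  by rewrite inE /= => Kt ->; exists t; rewrite ?addrK.
rewrite card_in_imset ?cardsX ?cardsE ?card_Kq 1?mulnC //.
move=> [s1 t1] [s2 t2] /setXP[s1_span Kt1] /setXP[s2_span Kt2] /= eq12.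
move: Kt1 Kt2; rewrite !in_set => Kt1 Kt2.
have t12 : t1 = t2.
  apply: contraNeq y_notin; rewrite -subr_eq0 => t12_neq0.
  have -> : y = (t1 - t2)^-1 * (-1 * s1 + s2).
    apply: (canRL (mulKf t12_neq0)).
    have -> : s2 = s1 + t1 * y - t2 * y by rewrite eq12 addrK.
    ring.
  by rewrite span_onZ ?rpredV ?rpredB ?span_onD ?span_onZ ?rpredN1.
by move: eq12; rewrite t12 => /addIr->.
Qed.

Lemma rk_ins_coord u y : rk q (ins_coord j u y) = (rk q u + (y \notin span u))%N.
Proof.
apply/eqP; rewrite -(eqn_exp2l _ _ q_gt1) expnD !expn_rk.
have [y_span|y_notin] := boolP (y \in span u).
  by rewrite span_ins_coord_mem ?muln1.
by rewrite card_span_ins_coord // mulnC.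
Qed.

Lemma rk_ins_coord_shift u y c0 : c0 \in coefs setT ->
  rk q (ins_coord j (u + [ffun k => y * c0 k]) y) = rk q (ins_coord j u y).
Proof.
move=> /coefsTP Kc0; apply: eq_rk.
have y_span w : y \in span (ins_coord j w y).
  by rewrite -{1}(ins_coord_j j w y) mem_span_on_coord ?inE.
have coord_span w k : w k \in span (ins_coord j w y).
  by rewrite -(ins_coord_lift j w y) mem_span_on_coord ?inE.
apply/eqP; rewrite eqEsubset; apply/andP; split; apply: span_ins_coord_sub => // k.
  by rewrite !ffunE mulrC span_on_lin.
have -> : u k = (u + [ffun k => y * c0 k]) k + - c0 k * y by rewrite !ffunE mulNr mulrC addrK.
by rewrite span_on_lin ?rpredN.
Qed.

End InsertCoordinate.

Lemma exists_dependent_coord n (v : {ffun 'I_n.+1 -> F}) :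
  rk q v != n.+1 -> exists j, v j \in span (del_coord j v).
Proof.
move=> rk_neq; apply/existsP; move: rk_neq; apply: contraR => /existsPn indep.
rewrite eqn_leq rk_leq /= -{1}(card_ord n.+1) -cardsT.
apply: leq_bigmax_cond; apply/coords_indepP => c Kc rel k _.
apply/eqP; apply: contraNT (indep k) => ck_neq0.
have /subsetP := mem_span_on_relation Kc rel (in_setT k) ck_neq0; apply.
apply: span_on_sub => i; rewrite !inE andbT => i_neq_k.
case: (unliftP k i) i_neq_k => [i' ->|->]; last by rewrite eqxx.
by rewrite -(ffunE (fun i => v (lift k i))) mem_span_on_coord ?inE.
Qed.

Lemma card_fibre n (u : {ffun 'I_n -> F}) z :
  (#|[set c in coefs setT | dotp c u == z]| * q ^ rk q u = (z \in span u) * q ^ n)%N.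
Proof.
pose fib z := [set c in coefs setT | dotp c u == z]; rewrite -/(fib z).
have [z_span|z_notin] := boolP (z \in span u); last first.
  suff -> : fib z = set0 by rewrite cards0.
  apply/setP => c; rewrite !inE; apply: contraNF z_notin => /andP[Kc /eqP <-].
  exact: span_on_dotp.
(* [c |-> d - c] maps fibres injectively into fibres. *)
have fib_le z1 z2 d : d \in coefs setT ->
    (forall c, c \in fib z1 -> d + [ffun k => -1 * c k] \in fib z2) ->
    (#|fib z1| <= #|fib z2|)%N.
  move=> Kd refl_fib.
  rewrite -(card_in_imset (f := fun c : {ffun _ -> _} => d + [ffun k => -1 * c k])).
    by apply/subset_leq_card/subsetP => _ /imsetP[c c_fib ->]; apply: refl_fib.
  move=> c c' _ _ /ffunP eqcc'; apply/ffunP => k; have := eqcc' k.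
  by rewrite !ffunE !mulN1r => /addrI/oppr_inj.
have fibE z' : z' \in span u -> #|fib z'| = #|fib 0|.
  case/imsetP => d Kd ->; apply/eqP; rewrite eqn_leq.
  by rewrite !(fib_le _ _ d) // => c; rewrite !in_set => /andP[Kc /eqP dotp_c];
    rewrite coefs_shift ?rpredN1 // dotp_shift mulN1r dotp_c ?subrr ?subr0 eqxx.
have card_coefs : (#|fib 0%R| * #|span u| = q ^ n)%N.
  have -> : (q ^ n = \sum_(c in coefs [set: 'I_n]) 1)%N.
    by rewrite sum1_card card_pffun_on card_Kq cardsT card_ord.
  rewrite (partition_big_imset (fun c => dotp c u)) /= mulnC -sum_nat_const.
  apply: eq_bigr => z' z'_span; rewrite -(fibE z') // -sum1_card.
  by apply: eq_bigl => c; rewrite in_set.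
by rewrite fibE // expn_rk mul1n card_coefs.
Qed.

(** * Counting the dual of a line *)

Local Notation Q := (q%:R : rat).
Local Notation M := (Q ^+ m).

Definition dual_count n (v : {ffun 'I_n -> F}) (i : nat) : rat :=
  \sum_(u : {ffun 'I_n -> F}) ((dotp u v == 0) && (rk q u == i))%:R.

Lemma sum_rk_ins_coord n (j : 'I_n.+1) (u : {ffun 'I_n -> F}) i :
  \sum_(y : F) (rk q (ins_coord j u y) == i)%:R
  = (rk q u == i)%:R * Q ^+ rk q u + ((rk q u).+1 == i)%:R * (M - Q ^+ rk q u).
Proof.
rewrite (bigID (mem (span u))) /=.
rewrite (eq_bigr (fun=> (rk q u == i)%:R)) => [|y y_span]; last first.
  by rewrite rk_ins_coord y_span addn0.
rewrite [X in _ + X](eq_bigr (fun=> ((rk q u).+1 == i)%:R)) => [|y /negPf y_notin]; last first.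
  by rewrite rk_ins_coord y_notin addn1.
have card_notin : #|(fun y => y \notin span u)|%:R = M - Q ^+ rk q u :> rat.
  by rewrite -!natrX expn_rk -cardF -(cardC (span u)) natrD addrC addKr.
by rewrite !sumr_const -[_ *+ #|span u|]mulr_natr
  -[_ *+ #|(fun y => y \notin span u)|]mulr_natr card_notin -expn_rk natrX.
Qed.

Lemma dual_count_ins_coord_mem n (j : 'I_n.+1) (w : {ffun 'I_n -> F}) x i :
  x \in span w ->
  dual_count (ins_coord j w x) i
  = Q ^+ i * dual_count w i + (0 < i)%:R * (M - Q ^+ i.-1) * dual_count w i.-1.
Proof.
(* With [x = c0.w], the substitution [u |-> u + y c0] removes the term [y x]
   and, being a GF(q)-column operation, preserves the rank of [(u, y)]. *)
case/imsetP=> c0 Kc0 ->.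
pose shift (u : {ffun 'I_n -> F}) y := u + [ffun k => y * c0 k].
have shift_inj y : injective (shift^~ y) by move=> u u' /addIr.
rewrite /dual_count (big_ins_coord j).
transitivity (\sum_u \sum_y ((dotp u w == 0) && (rk q (ins_coord j u y) == i))%:R : rat).
  rewrite exchange_big [RHS]exchange_big; apply: eq_bigr => y _.
  rewrite [RHS](reindex_inj (shift_inj y)); apply: eq_bigr => u _.
  by rewrite dotp_ins_coord dotp_shift rk_ins_coord_shift // addrC.
rewrite !mulr_sumr -big_split; apply: eq_bigr => u _ /=.
case: (dotp u w == 0) => /=; last by rewrite big1 ?mulr0 ?addr0.
have pin k (f : nat -> rat) : (rk q u == k)%:R * f (rk q u) = (rk q u == k)%:R * f k.
  by case: eqP => [->|]; rewrite ?mul0r.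
rewrite sum_rk_ins_coord (pin i (fun k => Q ^+ k)); case: i => [|i] /=.
  by rewrite !mul0r !addr0 mulrC.
by rewrite eqSS (pin i (fun k => M - Q ^+ k)); ring.
Qed.

Lemma rk_shift_full n (j : 'I_n.+1) (w : {ffun 'I_n -> F}) x c :
  rk q w = n -> x \notin span w -> c \in coefs setT ->
  rk q (w + [ffun k => x * c k]) = n.
Proof.
move=> rk_w x_notin Kc; apply/eqP; rewrite eqn_leq rk_leq /= -ltnS.
have := rk_ins_coord_shift j w x Kc; rewrite !rk_ins_coord rk_w x_notin addn1 => <-.
by rewrite -addn1 leq_add2l leq_b1.
Qed.

Lemma dual_count_ins_coord_neq0 n (j : 'I_n.+1) (w : {ffun 'I_n -> F}) x i : x != 0 ->
  dual_count (ins_coord j w x) i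
  = \sum_(u : {ffun 'I_n -> F}) ((rk q u + (- dotp u w / x \notin span u))%N == i)%:R.
Proof.
move=> x_neq0; rewrite /dual_count (big_ins_coord j); apply: eq_bigr => u _.
have dotp_eq0 y : (dotp (ins_coord j u y) (ins_coord j w x) == 0) = (y == - dotp u w / x).
  by rewrite dotp_ins_coord addr_eq0 (canF_eq (mulfK x_neq0)).
rewrite (bigD1 (- dotp u w / x)) //= dotp_eq0 eqxx rk_ins_coord big1 ?addr0 //.
by move=> y /negPf y_neq; rewrite dotp_eq0 y_neq.
Qed.

Lemma sum_dual_count_shift n (w : {ffun 'I_n -> F}) x k : x != 0 ->
  Q ^+ k * \sum_(c in coefs setT) dual_count (w + [ffun l => x * c l]) k
  = Q ^+ n * \sum_(u : {ffun 'I_n -> F}) ((- dotp u w / x \in span u) && (rk q u == k))%:R.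
Proof.
(* The sum over [c] counts the pairs [(c, u)] with [rk u = k] and [c.u = -(u.w)/x];
   group them by [u]. *)
move=> x_neq0; rewrite /dual_count exchange_big !mulr_sumr; apply: eq_bigr => u _ /=.
have [rk_u|_] := eqVneq (rk q u) k; last first.
  by rewrite andbF mulr0 big1 ?mulr0 // => c _; rewrite andbF.
under eq_bigr do rewrite andbT.
have dotp_eq0 (c : {ffun 'I_n -> F}) :
    (dotp u (w + [ffun l => x * c l]) == 0) = (dotp c u == - dotp u w / x).
  by rewrite dotpC dotp_shift dotpC addrC addr_eq0 (canF_eq (mulKf x_neq0)) mulrC.
under eq_bigr do rewrite dotp_eq0.
rewrite sum_indicator_card andbT mulrC [RHS]mulrC -rk_u -!natrX -!natrM.
by rewrite card_fibre.
Qed.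

Lemma dual_count_ins_coord_full n (j : 'I_n.+1) (w : {ffun 'I_n -> F}) x
    (T A : nat -> rat) :
  rk q w = n -> x \notin span w ->
  (forall w' : {ffun 'I_n -> F}, rk q w' = n -> forall k, dual_count w' k = T k) ->
  (forall k, \sum_(u : {ffun 'I_n -> F}) (rk q u == k)%:R = A k) ->
  forall i, dual_count (ins_coord j w x) i
            = Q ^+ i * T i + (0 < i)%:R * (A i.-1 - Q ^+ i.-1 * T i.-1).
Proof.
move=> rk_w x_notin count_full count_all i.
have x_neq0 : x != 0 by apply: contraNneq x_notin => ->; exact: span_on0.
have count_mem k :
    \sum_(u : {ffun 'I_n -> F}) ((- dotp u w / x \in span u) && (rk q u == k))%:R
    = Q ^+ k * T k.
  apply: (mulfI (expf_neq0 n (Q_neq0 (ltnW q_gt1)))).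
  rewrite -sum_dual_count_shift // mulrCA; congr (_ * _).
  rewrite (eq_bigr (fun=> T k)) => [|c Kc]; last by rewrite count_full // (rk_shift_full j).
  by rewrite sumr_const card_pffun_on card_Kq cardsT card_ord -natrX mulr_natl.
rewrite dual_count_ins_coord_neq0 // -!count_mem -count_all -sumrB mulr_sumr -big_split.
apply: eq_bigr => u _ /=; case: (_ \in span u); rewrite ?addn0 ?addn1 /=.
  by rewrite subrr mulr0 addr0.
by rewrite add0r subr0; case: i => [|i] /=; rewrite ?mul0r ?mul1r ?eqSS.
Qed.

Lemma hcoef_rank_wenum_dual n (v : {ffun 'I_n -> F}) i (k : int) :
  hcoef (rank_wenum q (dual_line v)) i k = dual_count v i.
Proof.
rewrite /hcoef /dual_count /=; case: leqP => [_|lt_ni].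
  rewrite -sum_indicator_card big_mkcond; apply: eq_bigr => u _.
  by rewrite in_set; case: (_ == 0).
by rewrite big1 // => u _; rewrite (ltn_eqF (leq_ltn_trans (rk_leq u) lt_ni)) andbF.
Qed.

Theorem dual_countE n (v : {ffun 'I_n -> F}) i :
  dual_count v i = coef_dual q m n (rk q v) i.
Proof.
have q_gt0 := ltnW q_gt1.
elim: n v i => [|n IH] v i.
  have v0 : v = 0 by apply/ffunP => -[].
  rewrite /dual_count (big_pred1 (0 : {ffun 'I_0 -> F})) => [|u]; last first.
    by apply/esym/eqP/ffunP => -[].
  rewrite v0 !rk0 coef_dual_r0 // /coefA /= hcoef_hone /dotp big_ord0.
  by rewrite eqxx eq_sym.
have count_rank k : \sum_(u : {ffun 'I_n -> F}) (rk q u == k)%:R = coefA q m n k.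
  rewrite -(coef_dual_r0 m q_gt0) -(rk0 n) -IH; apply: eq_bigr => u _.
  by rewrite [dotp u 0]big1 ?eqxx // => l _; rewrite ffunE mulr0.
have [rk_full|rk_lt] := eqVneq (rk q v) n.+1.
  have rk_ins := rk_ins_coord ord_max (del_coord ord_max v) (v ord_max).
  rewrite del_coordK rk_full in rk_ins.
  have x_notin : v ord_max \notin span (del_coord ord_max v).
    apply/negP => x_span; move: rk_ins; rewrite x_span addn0 => rk_del.
    by have := rk_leq (del_coord ord_max v); rewrite -rk_del ltnn.
  have rk_del : rk q (del_coord ord_max v) = n by move: rk_ins; rewrite x_notin addn1 => -[].
  rewrite rk_full -(del_coordK ord_max v).
  rewrite (dual_count_ins_coord_full (T := coef_dual q m n n) _ rk_del x_notin _ count_rank).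
    by rewrite coef_dual_SS.
  by move=> w rk_w k; rewrite IH rk_w.
have [j x_span] := exists_dependent_coord rk_lt.
have rk_v : rk q v = rk q (del_coord j v).
  by rewrite -{1}(del_coordK j v) rk_ins_coord x_span addn0.
by rewrite -{1}(del_coordK j v) dual_count_ins_coord_mem // !IH rk_v coef_dual_S // rk_leq.
Qed.

End RankTheory.

Theorem proposition16 (F : finFieldType) (q m n : nat)
  (hq : (1 < q)%N) (hm : (0 < m)%N) (hF : #|F| = (q ^ m)%N)
  (v : {ffun 'I_n -> F}) (r : nat) (hr : rk q v = r) :
  forall i : nat,
    hcoef (rank_wenum q (dual_line v)) i m%:Z =
    hcoef (hscale (fun _ => (q%:R : rat) ^- m)
             (hadd (qpow q (hA q) n)
                   (hscale (fun _ => (q%:R : rat) ^+ m - 1)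
                           (qprod q (qpow q hD r) (qpow q (hA q) (n - r))))))
          i m%:Z.
Proof.
move=> i; rewrite hcoef_rank_wenum_dual (dual_countE hq hm hF) hr.
by rewrite hcoef_hscale hcoef_hadd hcoef_hscale.
Qed.
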